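(* Let $m\ge 3$ and let $\Omega\subset\mathbb{S}^m$ be an open domain with $\partial\Omega=\mathcal{V}_1\cup\mathcal{V}_2$, where $\mathcal{V}_1,\mathcal{V}_2$ are disjoint compact submanifolds of $\mathbb{S}^m$ (possibly of dimension zero, and $\mathcal V_2$ possibly empty). Let $\rho\in C^{2,\alpha}(\Omega\cup\mathcal{V}_1)$ and $\sigma=e^{-\rho}$, and assume: (1) $\sigma^2$ extends to a $C^{1,1}$ function on $\overline{\Omega}$; (2) $|\nabla\sigma|^2$ extends to a Lipschitz function on $\overline{\Omega}$. Then there is $t_0>0$ such that for all $t>t_0$ the map $\phi_t:=\phi^{\rho+t}:\Omega\cup\mathcal{V}_1\to\mathbb{H}^{m+1}$ associated to $\rho_t=\rho+t$ is an embedded (injective) horospherically concave hypersurface.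
   Context: $\mathbb{S}^m\subset\mathbb{R}^{m+1}$ is the unit sphere with round metric $g_0$; $\nabla$, $\nabla^2$, $|\cdot|$ are with respect to $g_0$. Let $\mathbb{L}^{m+2}$ be $\mathbb{R}^{m+2}$ with $\langle\!\langle x,y\rangle\!\rangle=-x_0y_0+\sum_{i=1}^{m+1}x_iy_i$, and $\mathbb{H}^{m+1}=\{x:\langle\!\langle x,x\rangle\!\rangle=-1,\ x_0>0\}$. For $\rho\in C^1$ the associated map is $$\phi^\rho(x)=\frac{e^{\rho(x)}}{2}\Big(1+e^{-2\rho(x)}\big(1+|\nabla\rho(x)|^2\big)\Big)(1,x)+e^{-\rho(x)}\big(0,-x+\nabla\rho(x)\big).$$ For a conformal metric $g=e^{2\rho}g_0$ ($m\ge3$), the Schouten tensor is $\mathrm{Sch}(g)=\frac{1}{m-2}\big(\mathrm{Ric}(g)-\frac{R(g)}{2(m-1)}g\big)$; its eigenvalues $\lambda_1,\dots,\lambda_m$ are those of $g^{-1}\mathrm{Sch}(g)$. On the sphere, $\mathrm{Sch}(g)=\tfrac12 g_0-\nabla^2\rho+d\rho\otimes d\rho-\tfrac12|\nabla\rho|^2g_0$. The map $\phi^\rho$ ($\rho\in C^2$) is called a horospherically concave hypersurface when all eigenvalues of the Schouten tensor of $e^{2\rho}g_0$ are $<1/2$; then $\phi^\rho$ is an immersion with unit normal $\eta=\phi^\rho-e^{\rho}(1,x)$ whose principal curvatures $\kappa_i>-1$ satisfy $\lambda_i=\tfrac12-\tfrac1{1+\kappa_i}$. *)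

From mathcomp Require Import all_boot all_order all_algebra.
From mathcomp Require Import all_classical all_reals all_analysis.
Import Order.TTheory GRing.Theory Num.Theory.
Import numFieldNormedType.Exports.
Set Implicit Arguments. Unset Strict Implicit. Unset Printing Implicit Defensive.
Local Open Scope ring_scope.
Local Open Scope classical_set_scope.

Section Defs.
Variable R : realType.

Definition dotv (n : nat) (x y : 'rV[R]_n) : R := \sum_(i < n) x ord0 i * y ord0 i.
Definition enorm (n : nat) (x : 'rV[R]_n) : R := Num.sqrt (dotv x x).

Definition sphere (m : nat) : set 'rV[R]_(m.+1) := [set x | dotv x x = 1].

Definition ebas (n : nat) (i : 'I_n) : 'rV[R]_n := delta_mx ord0 i.

Fixpoint iterD (n p : nat) (vs : seq 'rV[R]_n) (F : 'rV[R]_n -> 'rV[R]_p)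
    : 'rV[R]_n -> 'rV[R]_p :=
  match vs with
  | [::] => F
  | v :: vs' => 'D_v (iterD vs' F)
  end.
Definition smooth_on (n p : nat) (U : set 'rV[R]_n) (F : 'rV[R]_n -> 'rV[R]_p) :=
  forall (vs : seq 'rV[R]_n) x, U x -> differentiable (iterD vs F) x.

Definition submanifold (n k : nat) (V : set 'rV[R]_n) :=
  (k <= n)%N /\
  forall p, V p -> exists (U : set 'rV[R]_n) (F : 'rV[R]_n -> 'rV[R]_(n - k)),
    [/\ open U, U p, smooth_on U F,
        (forall w : 'rV[R]_(n - k), exists v, 'D_v F p = w) &
        V `&` U = [set x | U x /\ F x = 0]].

(** Functions on (subsets of) the sphere are differentiated through their
    degree-0 homogeneous extension y |-> f (y/|y|); at a point x of the sphere
    its ambient gradient is the spherical gradient and its ambient Hessian,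
    restricted to T_x S^m, is the spherical Hessian (w.r.t. g_0). *)
Definition radial (m : nat) (f : 'rV[R]_(m.+1) -> R) : 'rV[R]_(m.+1) -> R :=
  fun y => f ((enorm y)^-1 *: y).
Definition D1 (m : nat) (f : 'rV[R]_(m.+1) -> R) (i : 'I_(m.+1)) :=
  'D_(ebas i) (radial f).
Definition D2 (m : nat) (f : 'rV[R]_(m.+1) -> R) (i j : 'I_(m.+1)) :=
  'D_(ebas i) ('D_(ebas j) (radial f)).

Definition ext (m : nat) (Om : set 'rV[R]_(m.+1)) (g : 'rV[R]_(m.+1) -> R) (p : 'rV[R]_(m.+1)) : R :=
  lim (g @ within Om (nbhs p)).

Definition C2_upto (m : nat) (Om D : set 'rV[R]_(m.+1)) (f : 'rV[R]_(m.+1) -> R) :=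
  [/\ {within D, continuous f},
      (forall x, Om x -> differentiable (radial f) x),
      (forall j x, Om x -> differentiable ('D_(ebas j) (radial f)) x),
      (forall i j x, Om x -> D1 f i @ x --> D1 f i x /\ D2 f i j @ x --> D2 f i j x) &
      (forall i j p, D p -> cvg (D1 f i @ within Om (nbhs p)) /\
                            cvg (D2 f i j @ within Om (nbhs p)))].

Definition C2alpha (m : nat) (Om D : set 'rV[R]_(m.+1)) (alpha : R)
    (f : 'rV[R]_(m.+1) -> R) :=
  C2_upto Om D f /\
  forall K, compact K -> K `<=` D -> exists C : R, forall i j x y,
    K x -> K y -> Om x -> Om y ->
    `|D2 f i j x - D2 f i j y| <= C * powR (enorm (x - y)) alpha.

Definition C11_closure (m : nat) (Om : set 'rV[R]_(m.+1)) (f : 'rV[R]_(m.+1) -> R) :=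
  [/\ (forall x, Om x -> differentiable (radial f) x),
      (forall i x, Om x -> D1 f i @ x --> D1 f i x),
      {within closure Om, continuous f},
      (forall i p, closure Om p -> cvg (D1 f i @ within Om (nbhs p))) &
      exists C : R, forall i x y, Om x -> Om y ->
        `|D1 f i x - D1 f i y| <= C * enorm (x - y)].

Definition sgrad (m : nat) (Om : set 'rV[R]_(m.+1)) (f : 'rV[R]_(m.+1) -> R) (p : 'rV[R]_(m.+1))
  : 'rV[R]_(m.+1) := \row_i ext Om (D1 f i) p.
Definition shess (m : nat) (Om : set 'rV[R]_(m.+1)) (f : 'rV[R]_(m.+1) -> R) (p : 'rV[R]_(m.+1))
  : 'M[R]_(m.+1) := \matrix_(i, j) ext Om (D2 f i j) p.
Definition bilin (m : nat) (H : 'M[R]_(m.+1)) (X Y : 'rV[R]_(m.+1)) : R :=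
  \sum_i \sum_j X ord0 i * H i j * Y ord0 j.

(** Schouten tensor of e^{2 rho} g_0 at p:
    1/2 g_0 - Hess rho + d rho (x) d rho - 1/2 |grad rho|^2 g_0 *)
Definition schouten (m : nat) (Om : set 'rV[R]_(m.+1)) (rho : 'rV[R]_(m.+1) -> R)
    p (X Y : 'rV[R]_(m.+1)) : R :=
  let g := sgrad Om rho p in
  2^-1 * dotv X Y - bilin (shess Om rho p) X Y + dotv g X * dotv g Y
  - 2^-1 * dotv g g * dotv X Y.

Definition tangent (m : nat) (p X : 'rV[R]_(m.+1)) := dotv p X = 0.

Definition schouten_eigenvalue (m : nat) (Om : set 'rV[R]_(m.+1))
    (rho : 'rV[R]_(m.+1) -> R) (p : 'rV[R]_(m.+1)) (lam : R) :=
  exists X, [/\ tangent p X, X != 0 &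
    forall Y, tangent p Y ->
      schouten Om rho p X Y = lam * (expR (2 * rho p) * dotv X Y)].

(** phi^rho : D -> L^{m+2} = R x R^{m+1} *)
Definition phi (m : nat) (Om : set 'rV[R]_(m.+1)) (rho : 'rV[R]_(m.+1) -> R) (p : 'rV[R]_(m.+1))
  : R * 'rV[R]_(m.+1) :=
  let g := sgrad Om rho p in
  let A := expR (rho p) / 2 * (1 + expR (- (2 * rho p)) * (1 + dotv g g)) in
  (A, A *: p + expR (- rho p) *: (g - p)).

Definition horo_concave (m : nat) (Om D : set 'rV[R]_(m.+1)) (rho : 'rV[R]_(m.+1) -> R) :=
  C2_upto Om D rho /\
  forall p, D p -> forall lam, schouten_eigenvalue Om rho p lam -> lam < 2^-1.

Definition injective_on (T U : Type) (D : set T) (f : T -> U) :=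
  forall x y, D x -> D y -> f x = f y -> x = y.

Definition grad_in (m : nat) (f : 'rV[R]_(m.+1) -> R) (x : 'rV[R]_(m.+1)) : 'rV[R]_(m.+1) :=
  \row_i D1 f i x.

End Defs.

From mathcomp Require Import all_boot all_order all_algebra.
From mathcomp Require Import all_classical all_reals all_analysis.
From mathcomp.algebra_tactics Require Import ring lra.
Import Order.TTheory GRing.Theory Num.Theory.
Import numFieldNormedType.Exports.
Local Open Scope ring_scope.
Local Open Scope classical_set_scope.
Set Implicit Arguments. Unset Strict Implicit. Unset Printing Implicit Defensive.

(* Adding [t] to [rho] changes neither the gradient nor the Hessian of [rho],
   hence not the Schouten tensor, while the metric [e^(2 rho) g_0] is multiplied
   by [e^(2t)]; so every Schouten eigenvalue of [rho + t] is [e^(-2t)] times one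
   of [rho], and it suffices to bound [sigma^2 Sch] above by a multiple of [g_0],
   with [sigma = e^-rho].  The first-order terms of [sigma^2 Sch] are controlled
   by the bounds on [sigma^2] and [|grad sigma|^2 = sigma^2 |grad rho|^2], and
   [- sigma^2 Hess rho] is bounded above because
   [Hess sigma^2 = -2 sigma^2 Hess rho + 4 sigma^2 d rho (x) d rho] while
   [grad sigma^2] is Lipschitz.  For injectivity, pairing [phi_t x = phi_t y]
   with [x - y] and using that [sigma^2 grad rho = - grad sigma^2 / 2] and
   [|grad sigma|^2] are Lipschitz gives [|x - y|^2 <= C e^(-2t) |x - y|^2].
   All estimates pass from [Omega] to [Omega u V1] by continuity. *)

Section Euclid.
Variables (R : realType) (n : nat).
Implicit Types (x y z : 'rV[R]_n) (a : R).

Lemma dotvC x y : dotv x y = dotv y x.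
Proof. by apply: eq_bigr => i _; rewrite mulrC. Qed.

Lemma dotvDl x y z : dotv (x + y) z = dotv x z + dotv y z.
Proof. by rewrite /dotv -big_split; apply: eq_bigr => i _; rewrite !mxE mulrDl. Qed.

Lemma dotvZl a x y : dotv (a *: x) y = a * dotv x y.
Proof. by rewrite /dotv mulr_sumr; apply: eq_bigr => i _; rewrite !mxE mulrA. Qed.

Lemma dotvBl x y z : dotv (x - y) z = dotv x z - dotv y z.
Proof. by rewrite dotvDl -scaleN1r dotvZl mulN1r. Qed.

Lemma dotvDr x y z : dotv z (x + y) = dotv z x + dotv z y.
Proof. by rewrite dotvC dotvDl !(dotvC z). Qed.

Lemma dotvZr a x y : dotv y (a *: x) = a * dotv y x.
Proof. by rewrite dotvC dotvZl dotvC. Qed.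

Lemma dotvBr x y z : dotv z (x - y) = dotv z x - dotv z y.
Proof. by rewrite dotvC dotvBl !(dotvC z). Qed.

Lemma dotv_ge0 x : 0 <= dotv x x.
Proof. by apply: sumr_ge0 => i _; rewrite -expr2 sqr_ge0. Qed.

Lemma sqr_coord_le_dotv x i : x ord0 i ^+ 2 <= dotv x x.
Proof.
rewrite /dotv (bigD1 i) //= -expr2 lerDl.
by apply: sumr_ge0 => j _; rewrite -expr2 sqr_ge0.
Qed.

Lemma dotv_eq0 x : dotv x x = 0 -> x = 0.
Proof.
move=> x0; apply/rowP => i; rewrite mxE; apply/eqP; rewrite -sqrf_eq0 eq_le sqr_ge0 andbT.
by rewrite -x0 sqr_coord_le_dotv.
Qed.

Lemma enorm_sq x : enorm x ^+ 2 = dotv x x.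
Proof. by rewrite /enorm sqr_sqrtr // dotv_ge0. Qed.

Lemma enorm_ge0 x : 0 <= enorm x.
Proof. exact: sqrtr_ge0. Qed.

Lemma norm_coord_le_enorm x i : `|x ord0 i| <= enorm x.
Proof.
rewrite -ler_sqr ?nnegrE ?enorm_ge0 // enorm_sq real_normK ?num_real //.
exact: sqr_coord_le_dotv.
Qed.

Lemma enormZ a x : enorm (a *: x) = `|a| * enorm x.
Proof.
by rewrite /enorm dotvZl dotvZr mulrA -expr2 sqrtrM ?sqr_ge0 // sqrtr_sqr.
Qed.

Lemma enorm_distC x y : enorm (x - y) = enorm (y - x).
Proof. by rewrite -opprB -scaleN1r enormZ normrN normr1 mul1r. Qed.

Lemma dotv_sqr_le x y : dotv x y ^+ 2 <= dotv x x * dotv y y.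
Proof.
have [/dotv_eq0 ->|yn0] := eqVneq (dotv y y) 0.
  by rewrite -(scale0r y) !dotvZr !mul0r expr0n /= mulr0.
have y0 : 0 < dotv y y by rewrite lt_def yn0 dotv_ge0.
pose t := dotv x y / dotv y y.
have ty : t * dotv y y = dotv x y by rewrite /t divfK.
have := dotv_ge0 (x - t *: y).
rewrite dotvBl !dotvBr !dotvZl !dotvZr (dotvC y x) ty => h.
rewrite -subr_ge0 (_ : _ - _ = dotv y y * (dotv x x - t * dotv x y)); last first.
  by rewrite -ty; ring.
by apply: mulr_ge0; [exact: ltW | move: h; rewrite subrr subr0].
Qed.

Lemma norm_dotv_le x y : `|dotv x y| <= enorm x * enorm y.
Proof.
rewrite -ler_sqr ?nnegrE ?mulr_ge0 ?enorm_ge0 // exprMn !enorm_sq real_normK ?num_real //.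
exact: dotv_sqr_le.
Qed.

Lemma enormD x y : enorm (x + y) <= enorm x + enorm y.
Proof.
rewrite -ler_sqr ?nnegrE ?addr_ge0 ?enorm_ge0 // enorm_sq dotvDl !dotvDr.
rewrite (dotvC y x) -(enorm_sq x) -(enorm_sq y).
have := norm_dotv_le x y; have := ler_norm (dotv x y); nra.
Qed.

Lemma ler_enorm_dist x y : `|enorm x - enorm y| <= enorm (x - y).
Proof.
rewrite ler_norml; have := enormD (x - y) y; have := enormD (y - x) x.
by rewrite !subrK enorm_distC => hx hy; apply/andP; split; lra.
Qed.

Lemma norm_dotv_coord_le x y C :
  (forall i, `|x ord0 i| <= C) -> `|dotv x y| <= n%:R * C * enorm y.
Proof.
move=> xC; apply: le_trans (ler_norm_sum _ _ _) _.
have -> : n%:R * C * enorm y = \sum_(i < n) (C * enorm y).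
  by rewrite sumr_const card_ord -mulr_natl; ring.
apply: ler_sum => i _; rewrite normrM.
by apply: ler_pM => //; exact: norm_coord_le_enorm.
Qed.

End Euclid.

Section Limits.
Variables (R : realType) (n : nat) (T : Type) (F : set_system T).
Context {FF : Filter F}.

Lemma cvg_sum_ord (f : 'I_n -> T -> R) (a : 'I_n -> R) :
  (forall i, f i @ F --> a i) -> (fun z => \sum_i f i z) @ F --> \sum_i a i.
Proof. by move=> fa; apply: cvg_big => //; exact: add_continuous. Qed.

Lemma cvg_coord (f : T -> 'rV[R]_n) (a : 'rV[R]_n) i :
  f @ F --> a -> (fun z => f z ord0 i) @ F --> a ord0 i.
Proof. by move=> fa; apply: (continuous_cvg _ (@coord_continuous _ _ _ ord0 i _)). Qed.

Lemma cvg_dotv (f g : T -> 'rV[R]_n) (a b : 'rV[R]_n) :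
  f @ F --> a -> g @ F --> b -> (fun z => dotv (f z) (g z)) @ F --> dotv a b.
Proof. by move=> fa gb; apply: cvg_sum_ord => i; apply: cvgM; apply: cvg_coord. Qed.

Lemma cvg_enorm (f : T -> 'rV[R]_n) (a : 'rV[R]_n) :
  f @ F --> a -> (fun z => enorm (f z)) @ F --> enorm a.
Proof. by move=> fa; apply: (continuous_cvg _ (@sqrt_continuous R _)); exact: cvg_dotv. Qed.

End Limits.

Lemma continuous_enormB (R : realType) n (w : 'rV[R]_n) :
  continuous (fun z : 'rV[R]_n => enorm (z - w)).
Proof.
move=> z; apply: (@cvg_enorm _ _ _ (nbhs z) _ (fun y => y - w)).
by apply: (@cvgB _ _ _ _ _ id (cst w)); [exact: cvg_id | exact: cvg_cst].
Qed.

Section Sphere.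
Variables (R : realType) (m : nat).
Implicit Types (x y z : 'rV[R]_m.+1).

Lemma enorm_sphere x : sphere x -> enorm x = 1.
Proof. by rewrite /enorm => ->; rewrite sqrtr1. Qed.

Lemma sphere_dist_le2 x y : sphere x -> sphere y -> enorm (x - y) <= 2.
Proof.
rewrite /sphere /= => x1 y1; rewrite -ler_sqr ?nnegrE ?enorm_ge0 // enorm_sq.
have := dotv_ge0 (x + y).
by rewrite dotvBl !dotvBr dotvDl !dotvDr x1 y1 (dotvC y x); lra.
Qed.

Lemma sphere_closed : closed (@sphere R m).
Proof.
have dotv_cont : continuous (fun z : 'rV[R]_m.+1 => dotv z z).
  by move=> z; apply: (@cvg_dotv _ _ _ (nbhs z) _ id id); exact: cvg_id.
exact: preimage_closed (fun z _ => dotv_cont z) (@closed_eq R (1 : R)).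
Qed.

End Sphere.

Section Derivatives.
Variables (R : realType) (n : nat).
Local Notation V := 'rV[R]_n.
Implicit Types (f : V -> R) (x v : V).

Lemma derive_coordE f x v : differentiable f x ->
  'D_v f x = \sum_j v ord0 j * 'D_(ebas R j) f x.
Proof.
move=> df; rewrite deriveE // {1}(row_sum_delta v) linear_sum.
by apply: eq_bigr => j _; rewrite linearZ /= deriveE.
Qed.

Lemma derive_add_cst f (t : R) x v : 'D_v (fun z => f z + t) x = 'D_v f x.
Proof.
rewrite /derive.
suff -> : (fun h : R => h^-1 *: (((fun z => f z + t) \o shift x) (h *: v) - (f x + t))) =
  (fun h => h^-1 *: ((f \o shift x) (h *: v) - f x)) by [].
by apply: funext => h; congr (_ *: _); rewrite /comp; ring.
Qed.

Lemma derive_expR_scale f (k : R) x v : differentiable f x ->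
  differentiable (fun z => expR (k * f z)) x /\
  'D_v (fun z => expR (k * f z)) x = k * expR (k * f x) * 'D_v f x.
Proof.
move=> df.
have dkf : differentiable (k *: f) x by apply: differentiableZ.
have de : differentiable (@expR R) ((k *: f) x).
  by apply/derivable1_diffP; exact: derivable_expR.
have -> : (fun z => expR (k * f z)) = expR \o (k *: f) by apply: funext.
split; first exact: differentiable_comp.
rewrite deriveE; last exact: differentiable_comp.
rewrite diff_comp //= deriv1E; last by apply/derivable1_diffP.
rewrite /= diffZ //= deriveE // derive1E.
rewrite (_ : 'D_1 expR ((k *: f) x) = expR ((k *: f) x)); last exact: derive_val.
change ((k * 'd f x v) * expR (k * f x) = k * expR (k * f x) * 'd f x v).
by rewrite mulrAC -mulrA mulrC -mulrA.
Qed.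

Lemma derive_scale_invariant f (c : R) z v : 0 < c ->
  (forall w, f (c^-1 *: w) = f w) -> differentiable f z ->
  differentiable f (c *: z) /\ 'D_v f (c *: z) = c^-1 * 'D_v f z.
Proof.
move=> c0 fc df.
pose L : V -> V := c^-1 *: (@id V).
have fL : f = f \o L by apply: funext => w; rewrite /= -fc.
have dL y : differentiable L y by apply: differentiableZ; exact: ex_diff.
have Lcz : L (c *: z) = z.
  by rewrite (_ : L _ = c^-1 *: (c *: z)) // scalerA mulVf ?gt_eqF ?scale1r.
have dfL : differentiable (f \o L) (c *: z).
  by apply: differentiable_comp => //; rewrite Lcz.
rewrite fL; split => //.
rewrite deriveE // diff_comp //; last by rewrite Lcz.
rewrite /= diffZ; last exact: ex_diff.
by rewrite Lcz /= diff_val /= linearZ /= -deriveE // -fL.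
Qed.

Lemma norm_derive_le f x v (K : R) : differentiable f x ->
  (\forall z \near x, `|f z - f x| <= K * enorm (z - x)) ->
  `|'D_v f x| <= K * enorm v.
Proof.
move=> df fK.
have dv : derivable f x v by apply: diff_derivable.
have line_cvg : (fun h : R => h *: v + x) @ (0 : R) --> x.
  rewrite -[X in _ --> X](add0r x) -(scale0r v).
  apply: cvgD; last exact: cvg_cst.
  by apply: (@cvgZ _ _ _ _ _ id (cst v)); [exact: cvg_id | exact: cvg_cst].
have fK0 : \forall h \near (0 : R), `|f (h *: v + x) - f x| <= K * enorm (h *: v + x - x).
  exact: line_cvg fK.
have quot_le : \forall h \near (0 : R)^',
    `|h^-1 *: ((f \o shift x) (h *: v) - f x)| <= K * enorm v.
  apply: filterS2 (nbhs_dnbhs fK0) (nbhs_dnbhs_neq (0 : R)) => h.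
  rewrite addrK enormZ /= => hh h0.
  by rewrite normrM normfV ler_pdivrMl ?normr_gt0 // mulrCA.
have ub := limr_le dv (filterS (fun h (hh : _ <= _) => le_trans (ler_norm _) hh) quot_le).
have lb : - (K * enorm v) <= 'D_v f x.
  apply: limr_ge => //; apply: filterS quot_le => h hh.
  by rewrite lerNl; apply: le_trans hh; rewrite -normrN ler_norm.
by rewrite ler_norml lb /=; exact: ub.
Qed.

End Derivatives.

Section Radial.
Variables (R : realType) (m : nat).
Local Notation V := 'rV[R]_m.+1.
Implicit Types (f : V -> R) (x z : V).

Lemma radialZ f (c : R) z : 0 < c -> radial f (c *: z) = radial f z.
Proof.
move=> c0; rewrite /radial enormZ gtr0_norm // scalerA; congr (f (_ *: _)).
have [->|en0] := eqVneq (enorm z) 0; first by rewrite mulr0 invr0 mul0r.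
by rewrite invfM mulrAC mulVf ?gt_eqF // mul1r.
Qed.

Lemma radial_add_cst f (t : R) : radial (fun x => f x + t) = fun z => radial f z + t.
Proof. by []. Qed.

Lemma radial_sphere f x : sphere x -> radial f x = f x.
Proof. by move=> /enorm_sphere x1; rewrite /radial x1 invr1 scale1r. Qed.

Lemma near_radial_projection (U Om : set V) x : open U -> Om = U `&` @sphere R m ->
  Om x -> \forall z \near x, 2^-1 < enorm z /\ Om ((enorm z)^-1 *: z).
Proof.
move=> oU -> [Ux Sx].
have x1 := enorm_sphere Sx.
have enorm_cvg : (fun z : V => enorm z) @ x --> (1 : R).
  by rewrite -x1; apply: (@cvg_enorm _ _ _ (nbhs x) _ id); exact: cvg_id.
have proj_cvg : (fun z : V => (enorm z)^-1 *: z) @ x --> x.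
  have := cvgZ (cvgV (oner_neq0 R) enorm_cvg) (@cvg_id _ (nbhs x)).
  by rewrite invr1 scale1r; exact.
have nbhsU : nbhs x U by apply: open_nbhs_nbhs; split.
have enorm_gt : \forall z \near x, 2^-1 < enorm z.
  by apply: (cvgr_gt _ enorm_cvg); lra.
apply: filterS2 enorm_gt (proj_cvg _ nbhsU) => z z2 Uz; split => //; split => //.
rewrite /sphere /= dotvZl dotvZr -(enorm_sq z) mulrA -expr2 -exprMn mulVf ?expr1n //.
by rewrite gt_eqF //; lra.
Qed.

Lemma inv_enorm_sub1_le x z : sphere x -> 0 < enorm z ->
  `|(enorm z)^-1 - 1| <= (enorm z)^-1 * enorm (z - x).
Proof.
move=> /enorm_sphere x1 z0.
have -> : (enorm z)^-1 - 1 = (enorm z)^-1 * (1 - enorm z).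
  by rewrite mulrBr mulr1 mulVf ?gt_eqF.
rewrite normrM gtr0_norm ?invr_gt0 // ler_pM2l ?invr_gt0 //.
by rewrite -x1 distrC; exact: ler_enorm_dist.
Qed.

Lemma enorm_projB_le x z : sphere x -> 0 < enorm z ->
  enorm ((enorm z)^-1 *: z - x) <= 2 * (enorm z)^-1 * enorm (z - x).
Proof.
move=> Sx z0; set c := enorm z.
have -> : c^-1 *: z - x = c^-1 *: (z - x) + (c^-1 - 1) *: x.
  by rewrite scalerBr scalerBl scale1r addrA subrK.
apply: le_trans (enormD _ _) _.
rewrite !enormZ (enorm_sphere Sx) mulr1 gtr0_norm ?invr_gt0 //.
by have := inv_enorm_sub1_le Sx z0; lra.
Qed.

End Radial.

Lemma expR_sqrN (R : realType) (a : R) : expR (- a) ^+ 2 = expR (-2 * a).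
Proof. by rewrite -expRM_natl mulrN mulNr. Qed.

Lemma ler_norm_scaled_sub (R : realType) (ci e Sy Sx L B : R) :
  0 < ci < 2 -> 0 <= L -> 0 <= B -> 0 <= e ->
  `|Sy - Sx| <= L * (2 * ci * e) -> `|Sx| <= B -> `|ci - 1| <= ci * e ->
  `|ci * Sy - Sx| <= (8 * L + 2 * B) * e.
Proof.
move=> /andP[ci0 ci2] L0 B0 e0 hSy hSx hci.
have -> : ci * Sy - Sx = ci * (Sy - Sx) + (ci - 1) * Sx by ring.
apply: le_trans (ler_normD _ _) _; rewrite !normrM (gtr0_norm ci0).
have h1 : ci * `|Sy - Sx| <= ci * (L * (2 * ci * e)) by rewrite ler_pM2l.
have h2 : `|ci - 1| * `|Sx| <= ci * e * B by apply: ler_pM.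
have h3 : ci * (L * (2 * ci * e)) <= 8 * L * e.
  have cc : ci * ci <= 4 by nra.
  have : 0 <= L * e by apply: mulr_ge0.
  rewrite (_ : ci * _ = (ci * ci) * (2 * (L * e))); last by ring.
  by move=> Le; rewrite (_ : 8 * L * e = 4 * (2 * (L * e))); [apply: ler_wpM2r; lra | ring].
have h4 : ci * e * B <= 2 * B * e.
  rewrite (_ : 2 * B * e = 2 * (e * B)) ?mulrA; last by ring.
  by apply: ler_wpM2r => //; nra.
lra.
Qed.

Section HessianBound.
Variables (R : realType) (m : nat).
Local Notation V := 'rV[R]_m.+1.
Variables (U Om : set V) (rho s : V -> R).
Hypothesis oU : open U.
Hypothesis Om_def : Om = U `&` @sphere R m.
Hypothesis drho : forall x, Om x -> differentiable (radial rho) x.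
Hypothesis ddrho : forall j x, Om x -> differentiable ('D_(ebas R j) (radial rho)) x.
Hypothesis s_def : forall x, Om x -> s x = expR (- rho x) ^+ 2.

Local Notation r := (radial rho).
Let E : V -> R := fun z => expR (-2 * r z).

Lemma sphere_of_Om x : Om x -> sphere x.
Proof. by rewrite Om_def => -[]. Qed.

Lemma radial_rho_Om x : Om x -> r x = rho x.
Proof. by move/sphere_of_Om; exact: radial_sphere. Qed.

Lemma derive_radial_Om_scale y c v : Om y -> 0 < c ->
  differentiable r (c *: y) /\ 'D_v r (c *: y) = c^-1 * 'D_v r y.
Proof.
move=> Oy c0; apply: derive_scale_invariant => // [w|]; last exact: drho.
by rewrite radialZ // invr_gt0.
Qed.

Lemma derive_radial_s x v : Om x -> 'D_v (radial s) x = -2 * E x * 'D_v r x.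
Proof.
move=> Ox; have s_near : \forall z \near x, radial s z = E z.
  apply: filterS (near_radial_projection oU Om_def Ox) => z [_ Oz].
  by rewrite /radial s_def // expR_sqrN.
by rewrite (near_eq_derive _ s_near); have [_ ->] := derive_expR_scale (-2) v (drho Ox).
Qed.

Lemma derive_radial_expRN x v : Om x ->
  'D_v (radial (fun y => expR (- rho y))) x = - expR (- r x) * 'D_v r x.
Proof.
move=> Ox; rewrite (_ : radial _ = fun z => expR (-1 * r z)); last first.
  by apply: funext => z; rewrite mulN1r.
by have [_ ->] := derive_expR_scale (-1) v (drho Ox); rewrite !mulN1r.
Qed.

Variables (Cs Bs : R).
Hypothesis Cs_ge0 : 0 <= Cs.
Hypothesis Bs_ge0 : 0 <= Bs.
Hypothesis D1s_lipschitz : forall i x y, Om x -> Om y ->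
  `|D1 s i x - D1 s i y| <= Cs * enorm (x - y).
Hypothesis D1s_bounded : forall i x, Om x -> `|D1 s i x| <= Bs.

Variable X : V.

(* On the cone over [Om], [T] is ['D_X (radial s)]: differentiating it along
   [X] brings in the Hessian of [rho] (see [derive_T]), while it inherits the
   Lipschitz bound of [grad s] (see [T_lipschitz_near]). *)
Let Q : V -> R := \sum_j X ord0 j *: 'D_(ebas R j) r.
Let T : V -> R := (-2 *: E) * Q.

Let QE z : Q z = \sum_j X ord0 j * 'D_(ebas R j) r z.
Proof. by rewrite /Q fct_sumE. Qed.

Lemma derive_T x : Om x ->
  'D_X T x = -2 * E x * bilin (\matrix_(i, j) D2 rho i j x) X X + 4 * E x * Q x ^+ 2.
Proof.
move=> Ox.
have dQ : differentiable Q x.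
  by apply: differentiable_sum => j; apply: differentiableZ; exact: ddrho.
have dE : differentiable E x by have [] := derive_expR_scale (-2) 0 (drho Ox).
have DQ : 'D_X Q x = bilin (\matrix_(i, j) D2 rho i j x) X X.
  rewrite (derive_coordE _ dQ) /bilin; apply: eq_bigr => i _.
  rewrite derive_sum; last first.
    by move=> j; apply: diff_derivable; apply: differentiableZ; exact: ddrho.
  rewrite mulr_sumr; apply: eq_bigr => j _.
  rewrite deriveZ; last exact: diff_derivable (ddrho j Ox).
  by rewrite mxE /D2 -mulrA; congr (_ * _); exact: mulrC.
rewrite deriveM; last 2 first.
- by apply: diff_derivable; apply: differentiableZ.
- exact: diff_derivable.
rewrite deriveZ; last exact: diff_derivable.
have [_ ->] := derive_expR_scale (-2) X (drho Ox).
rewrite (derive_coordE _ (drho Ox)) -QE DQ /E /=.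
change (-2 * expR (-2 * r x) * bilin (\matrix_(i, j) D2 rho i j x) X X
  + Q x * (-2 * (-2 * expR (-2 * r x) * Q x)) =
  -2 * expR (-2 * r x) * bilin (\matrix_(i, j) D2 rho i j x) X X
  + 4 * expR (-2 * r x) * Q x ^+ 2).
ring.
Qed.

Lemma T_Om y : Om y -> T y = dotv (grad_in s y) X.
Proof.
move=> Oy; change (-2 * E y * Q y = dotv (grad_in s y) X).
rewrite QE mulr_sumr; apply: eq_bigr => j _.
by rewrite mxE /D1 derive_radial_s //; ring.
Qed.

Lemma T_scale y c : Om y -> 0 < c -> T (c *: y) = c^-1 * T y.
Proof.
move=> Oy c0; change (-2 * E (c *: y) * Q (c *: y) = c^-1 * (-2 * E y * Q y)).
rewrite /E radialZ // !QE.
rewrite (eq_bigr (fun j => c^-1 * (X ord0 j * 'D_(ebas R j) r y))); last first.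
  by move=> j _; have [_ ->] := derive_radial_Om_scale (ebas R j) Oy c0; rewrite mulrCA.
by rewrite -mulr_sumr; ring.
Qed.

Lemma T_lipschitz_near x : Om x -> \forall z \near x,
  `|T z - T x| <= (8 * Cs + 2 * Bs) * ((m.+1)%:R * enorm X) * enorm (z - x).
Proof.
move=> Ox; apply: filterS (near_radial_projection oU Om_def Ox) => z [z2 Oy].
have z0 : 0 < enorm z by apply: lt_trans z2; rewrite invr_gt0.
set c := enorm z in z0 z2 Oy *; set y := c^-1 *: z in Oy *.
have zE : z = c *: y by rewrite /y scalerA mulfV ?gt_eqF // scale1r.
have x1 := sphere_of_Om Ox.
set K := (m.+1)%:R * enorm X.
have Lip : `|dotv (grad_in s y) X - dotv (grad_in s x) X| <= K * Cs * (2 * c^-1 * enorm (z - x)).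
  rewrite -dotvBl; apply: le_trans (norm_dotv_coord_le (C := Cs * enorm (y - x)) _ _) _.
    by move=> i; rewrite !mxE; exact: D1s_lipschitz.
  rewrite (_ : _ * _ * enorm X = K * Cs * enorm (y - x)); last by rewrite /K; ring.
  by rewrite ler_wpM2l ?mulr_ge0 ?enorm_ge0 //; exact: enorm_projB_le.
have Bnd : `|dotv (grad_in s x) X| <= K * Bs.
  apply: le_trans (norm_dotv_coord_le (C := Bs) _ _) _.
    by move=> i; rewrite mxE; exact: D1s_bounded.
  by rewrite /K mulrAC.
rewrite {1}zE T_scale // !T_Om //.
rewrite (_ : _ * enorm (z - x) = (8 * (K * Cs) + 2 * (K * Bs)) * enorm (z - x)); last by ring.
apply: ler_norm_scaled_sub => //.
- have ci : c * c^-1 = 1 by rewrite mulfV ?gt_eqF.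
  have ci0 : 0 < c^-1 by rewrite invr_gt0.
  by rewrite ci0 /=; nra.
- by rewrite !mulr_ge0 ?enorm_ge0.
- by rewrite !mulr_ge0 ?enorm_ge0.
- exact: enorm_ge0.
- exact: inv_enorm_sub1_le.
Qed.

Lemma hessian_lower_bound x : Om x ->
  - E x * bilin (\matrix_(i, j) D2 rho i j x) X X <= (4 * Cs + Bs) * (m.+1)%:R * dotv X X.
Proof.
move=> Ox.
have dT : differentiable T x.
  apply: differentiableM; first by apply: differentiableZ; have [] := derive_expR_scale (-2) 0 (drho Ox).
  by apply: differentiable_sum => j; apply: differentiableZ; exact: ddrho.
have hb := norm_derive_le X dT (T_lipschitz_near Ox).
have DT := derive_T Ox.
have EQ : 0 <= E x * Q x ^+ 2 by rewrite mulr_ge0 ?sqr_ge0 ?expR_ge0.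
have := ler_norm ('D_X T x).
rewrite -enorm_sq; set H := bilin _ X X in DT *.
have -> : - E x * H = ('D_X T x - 4 * (E x * Q x ^+ 2)) / 2 by rewrite DT; field.
rewrite (_ : (8 * Cs + 2 * Bs) * ((m.+1)%:R * enorm X) * enorm X =
   2 * ((4 * Cs + Bs) * (m.+1)%:R * enorm X ^+ 2)) in hb; last by ring.
lra.
Qed.

End HessianBound.

Section ShiftInvariance.
Variables (R : realType) (m : nat).
Local Notation V := 'rV[R]_m.+1.
Variables (Om : set V) (rho : V -> R) (t : R).
Local Notation rho_t := (fun x => rho x + t).

Lemma D1_add_cst i : D1 rho_t i = D1 rho i.
Proof. by apply: funext => x; rewrite /D1 radial_add_cst derive_add_cst. Qed.

Lemma D1_radial_add_cst j :
  'D_(ebas R j) (radial rho_t) = 'D_(ebas R j) (radial rho).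
Proof. by apply: funext => x; rewrite radial_add_cst derive_add_cst. Qed.

Lemma D2_add_cst i j : D2 rho_t i j = D2 rho i j.
Proof. by rewrite /D2 D1_radial_add_cst. Qed.

Lemma sgrad_add_cst : sgrad Om rho_t = sgrad Om rho.
Proof. by rewrite /sgrad (funext D1_add_cst). Qed.

Lemma schouten_add_cst : schouten Om rho_t = schouten Om rho.
Proof.
rewrite /schouten sgrad_add_cst /shess.
by rewrite (funext (fun i => funext (D2_add_cst i))).
Qed.

Lemma C2_upto_add_cst D : C2_upto Om D rho -> C2_upto Om D rho_t.
Proof.
case=> rho_cont drho ddrho D_cvg D_ext; split.
- by move=> x; apply: cvgD; [exact: rho_cont | exact: cvg_cst].
- move=> x Ox; rewrite radial_add_cst.
  by apply: differentiableD; [exact: drho | exact: differentiable_cst].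
- by move=> j x Ox; rewrite D1_radial_add_cst; exact: ddrho.
- by move=> i j x Ox; rewrite D1_add_cst D2_add_cst; exact: D_cvg.
- by move=> i j p Dp; rewrite D1_add_cst D2_add_cst; exact: D_ext.
Qed.

Lemma phi_add_cstE p :
  let g := sgrad Om rho p in
  let A := expR (rho p + t) / 2 * (1 + expR (- (2 * (rho p + t))) * (1 + dotv g g)) in
  phi Om rho_t p = (A, A *: p + (expR (- rho p) * expR (- t)) *: (g - p)).
Proof. by rewrite /phi sgrad_add_cst /= -expRD -opprD. Qed.

End ShiftInvariance.

(* The first coordinate of [phi] rescaled by [2 sigma tau], with
   [sigma = e^-r], [tau = e^-t] and [G = |grad rho|^2]. *)
Lemma phi_coord0_scaled (R : realType) (r t G : R) :
  2 * expR (- r) * expR (- t) * (expR (r + t) / 2 * (1 + expR (- (2 * (r + t))) * (1 + G)))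
  = 1 + expR (- t) ^+ 2 * (expR (- r) ^+ 2 + expR (- r) ^+ 2 * G).
Proof.
have e1 : expR (- r) * expR (- t) * expR (r + t) = 1.
  by rewrite -!expRD (_ : - r + - t + (r + t) = 0) ?expR0 //; ring.
have e2 : expR (- (2 * (r + t))) = (expR (- r) * expR (- t)) ^+ 2.
  by rewrite -expRD -expRM_natl; congr expR; ring.
rewrite e2 (_ : 2 * _ * _ * _ = expR (- r) * expR (- t) * expR (r + t) *
  (1 + (expR (- r) * expR (- t)) ^+ 2 * (1 + G))); last by field.
by rewrite e1 mul1r; ring.
Qed.

Section Closure.
Variables (R : realType) (n : nat).
Local Notation V := 'rV[R]_n.
Implicit Types (Om D : set V) (f : V -> R).

Lemma le_cvg_within Om p f (a b : R) : closure Om p ->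
  f @ within Om (nbhs p) --> a -> (forall q, Om q -> f q <= b) -> a <= b.
Proof.
move=> Om_p fa fb; have := @within_nbhs_proper _ Om p Om_p.
move=> PF; apply: (cvgr_to_le fa); apply: filterS (withinT _ _) => q; exact: fb.
Qed.

Lemma cvg_within_continuous Om p f : f @ p --> f p -> f @ within Om (nbhs p) --> f p.
Proof. by move=> fp; apply: cvg_trans fp; apply: cvg_app; exact: cvg_within. Qed.

Lemma le_dist_cvg_within Om p f (l b : R) (c : V) (K : R) : closure Om p ->
  f @ within Om (nbhs p) --> l ->
  (forall q, Om q -> `|f q - b| <= K * enorm (q - c)) -> `|l - b| <= K * enorm (p - c).
Proof.
move=> Om_p fl fb; rewrite -subr_le0.
apply: (le_cvg_within Om_p (f := fun q => `|f q - b| - K * enorm (q - c))).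
  apply: cvgB; first by apply: cvg_norm; apply: cvgB => //; exact: cvg_cst.
  by apply: cvgMl_tmp; apply: cvg_within_continuous; exact: continuous_enormB.
by move=> q Oq; rewrite subr_le0; exact: fb.
Qed.

Lemma lipschitz_cvg_within Om D (f g : V -> R) (K : R) :
  (forall p, D p -> closure Om p /\ f @ within Om (nbhs p) --> g p) ->
  (forall x y, Om x -> Om y -> `|f x - f y| <= K * enorm (x - y)) ->
  forall x y, D x -> D y -> `|g x - g y| <= K * enorm (x - y).
Proof.
move=> fg f_lip x y Dx Dy; have [Om_x fgx] := fg x Dx; have [Om_y fgy] := fg y Dy.
have gf q : Om q -> `|f q - g x| <= K * enorm (q - x).
  move=> Oq; rewrite distrC enorm_distC.
  by apply: le_dist_cvg_within Om_x fgx _ => q' Oq'; exact: f_lip.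
by rewrite distrC enorm_distC; exact: le_dist_cvg_within Om_y fgy gf.
Qed.

End Closure.

Lemma sphere_closure_bounded (R : realType) m (Om : set 'rV[R]_m.+1) (f : 'rV[R]_m.+1 -> R) :
  Om `<=` @sphere R m -> {within closure Om, continuous f} ->
  exists M, forall x, Om x -> f x <= M.
Proof.
move=> OmS f_cont.
have clS : closure Om `<=` @sphere R m.
  by rewrite [X in _ `<=` X](closure_id _).1; [exact: closureS | exact: sphere_closed].
have bd : bounded_set (closure Om).
  apply: filterS (nbhs_pinfty_ge (r := 1) _) => // M M1 x clx.
  apply: le_trans M1; rewrite (_ : `|x| = mx_norm x) // mx_normrE.
  apply: bigmax_le => // -[i j] _ /=; rewrite (ord1 i).
  by apply: le_trans (norm_coord_le_enorm _ _) _; rewrite enorm_sphere //; exact: clS.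
have := compact_bounded (continuous_compact f_cont (bounded_closed_compact bd (@closed_closure _ _))).
move=> /pinfty_ex_gt0 [M _ fM]; exists M => x Ox.
by apply: le_trans (ler_norm _) _; apply: fM; exists x => //; exact: subset_closure.
Qed.

Section SchoutenForm.
Variables (R : realType) (m : nat).
Local Notation V := 'rV[R]_m.+1.

Definition schouten_form (g : V) (H : 'M[R]_m.+1) (X : V) : R :=
  2^-1 * dotv X X - bilin H X X + dotv g X * dotv g X - 2^-1 * dotv g g * dotv X X.

Lemma schoutenE (Om : set V) rho p X :
  schouten Om rho p X X = schouten_form (sgrad Om rho p) (shess Om rho p) X.
Proof. by []. Qed.

Lemma cvg_schouten_form (T : Type) (F : set_system T) {FF : Filter F}
    (g : T -> V) (H : T -> 'M[R]_m.+1) (g0 : V) (H0 : 'M[R]_m.+1) X :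
  (forall i, (fun q => g q ord0 i) @ F --> g0 ord0 i) ->
  (forall i j, (fun q => H q i j) @ F --> H0 i j) ->
  (fun q => schouten_form (g q) (H q) X) @ F --> schouten_form g0 H0 X.
Proof.
move=> gg0 HH0.
have gX : (fun q => dotv (g q) X) @ F --> dotv g0 X.
  by apply: cvg_sum_ord => i; apply: cvgMr_tmp; exact: gg0.
have gg : (fun q => dotv (g q) (g q)) @ F --> dotv g0 g0.
  by apply: cvg_sum_ord => i; apply: cvgM; exact: gg0.
have HX : (fun q => bilin (H q) X X) @ F --> bilin H0 X X.
  apply: cvg_sum_ord => i; apply: cvg_sum_ord => j.
  by apply: cvgMr_tmp; apply: cvgMl_tmp; exact: HH0.
apply: cvgB; last by apply: cvgMr_tmp; apply: cvgMl_tmp.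
by apply: cvgD; [apply: cvgB => //; exact: cvg_cst | exact: cvgM].
Qed.

End SchoutenForm.

Lemma expR_sqrN_mul_lt1 (R : realType) (t K : R) : 0 <= K -> K <= 2 * t ->
  expR (- t) ^+ 2 * K < 1.
Proof.
move=> K0 Kt; have exp_ge := expR_ge1Dx (2 * t).
have e : expR (- t) ^+ 2 * expR (2 * t) = 1.
  by rewrite expR_sqrN -expRD (_ : -2 * t + 2 * t = 0) ?expR0 //; ring.
rewrite -[X in _ < X]e ltr_pM2l ?exprn_gt0 ?expR_gt0 //; lra.
Qed.

Lemma schouten_eigenvalue_add_cst_lt (R : realType) m (Om : set 'rV[R]_m.+1)
    rho p (K t lam : R) :
  (forall X, expR (- rho p) ^+ 2 * schouten Om rho p X X <= K * dotv X X) ->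
  0 <= K -> K + 1 <= t ->
  schouten_eigenvalue Om (fun x => rho x + t) p lam -> lam < 2^-1.
Proof.
move=> sch_le K0 Kt [X [tX X0 eig]].
have := sch_le X; rewrite -(schouten_add_cst Om rho t) (eig X tX).
have -> : expR (- rho p) ^+ 2 * (lam * (expR (2 * (rho p + t)) * dotv X X))
    = lam * expR (2 * t) * dotv X X.
  have e : expR (- rho p) ^+ 2 * expR (2 * (rho p + t)) = expR (2 * t).
    by rewrite expR_sqrN -expRD; congr expR; ring.
  by rewrite -e; ring.
have XX0 : 0 < dotv X X.
  by rewrite lt_def dotv_ge0 andbT; apply: contra X0 => /eqP /dotv_eq0 ->.
rewrite ler_pM2r // => le_K; rewrite ltNge; apply/negP => lam2.
have := expR_ge1Dx (2 * t).
have : 2^-1 * expR (2 * t) <= lam * expR (2 * t) by rewrite ler_wpM2r ?expR_ge0.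
lra.
Qed.

Section InjectivityAlgebra.
Variable R : realType.

(* [a] stands for [tau * A], with [A] the common first coordinate of [phi],
   and [t2] for [tau ^+ 2]. *)
Lemma sigma_diff_le (sx sy a t2 Fx Fy CF e M1 : R) :
  0 < sx -> 0 < sy -> 0 < t2 ->
  2 * sx * a = 1 + t2 * (sx ^+ 2 + Fx) -> 2 * sy * a = 1 + t2 * (sy ^+ 2 + Fy) ->
  0 <= Fy -> `|Fx - Fy| <= CF * e ->
  sx ^+ 2 <= M1 -> sy ^+ 2 <= M1 -> t2 * M1 <= 2^-1 ->
  `|sx - sy| <= 2 * t2 * sy * (CF * e).
Proof.
move=> sx0 sy0 t20 Ex Ey Fy0 FxFy sxM syM t2M.
pose q := 1 - t2 * (sx * sy) + t2 * Fy.
have dq : (sx - sy) * q = t2 * sy * (Fx - Fy).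
  have : sy * (2 * sx * a) = sx * (2 * sy * a) by ring.
  by rewrite Ex Ey /q => h; nra.
have q2 : 2^-1 <= q.
  have : t2 * (sx * sy) <= t2 * M1 by rewrite ler_pM2l //; nra.
  have : 0 <= t2 * Fy by rewrite mulr_ge0 // ltW.
  rewrite /q; lra.
have q0 : 0 < q by apply: lt_le_trans q2; rewrite invr_gt0.
have : `|sx - sy| * q <= t2 * sy * (CF * e).
  rewrite -[q]gtr0_norm // -normrM dq normrM gtr0_norm ?mulr_gt0 //.
  by rewrite ler_pM2l ?mulr_gt0.
have := normr_ge0 (sx - sy); nra.
Qed.

Lemma sqr_dist_eq0 (sx sy a t2 d e Gx Gy Fx Fy nC nB CF M1 : R) :
  0 < sx -> 0 < sy -> 0 < t2 -> 0 <= e -> d = e ^+ 2 ->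
  2 * a * d = 2 * t2 * (sy * Gy - sx * Gx) + t2 * (sx + sy) * d ->
  2 * sx * a = 1 + t2 * (sx ^+ 2 + Fx) -> 2 * sy * a = 1 + t2 * (sy ^+ 2 + Fy) ->
  0 <= Fx -> 0 <= Fy -> `|Fx - Fy| <= CF * e ->
  `|sy ^+ 2 * Gy - sx ^+ 2 * Gx| <= nC * d -> `|sy ^+ 2 * Gy| <= nB * e ->
  sx ^+ 2 <= M1 -> sy ^+ 2 <= M1 -> t2 * M1 <= 2^-1 -> t2 <= 1 ->
  0 <= nB -> 0 <= CF ->
  t2 * (2 * nC + 4 * CF * nB + 2 * M1) < 1 -> d = 0.
Proof.
move=> sx0 sy0 t20 e0 de E1 Ex Ey Fx0 Fy0 FxFy hG hGy sxM syM t2M t21 nB0 CF0 small.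
have d0 : 0 <= d by rewrite de sqr_ge0.
have dl := sigma_diff_le sx0 sy0 t20 Ex Ey Fy0 FxFy sxM syM t2M.
have key : (1 + t2 * (sx ^+ 2 + Fx)) * sy * d =
    2 * t2 * sy * (sy ^+ 2 * Gy - sx ^+ 2 * Gx) + 2 * t2 * (sx - sy) * (sy ^+ 2 * Gy)
    + t2 * sx * sy * (sx + sy) * d.
  rewrite -Ex (_ : 2 * sx * a * sy * d = sx * sy * (2 * a * d)); last by ring.
  by rewrite E1; ring.
have b1 : 2 * t2 * sy * (sy ^+ 2 * Gy - sx ^+ 2 * Gx) <= 2 * t2 * sy * (nC * d).
  by rewrite ler_pM2l ?mulr_gt0 //; apply: le_trans (ler_norm _) hG.
have b2 : 2 * t2 * (sx - sy) * (sy ^+ 2 * Gy) <= t2 * sy * (4 * CF * nB) * d.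
  have : (sx - sy) * (sy ^+ 2 * Gy) <= (2 * t2 * sy * (CF * e)) * (nB * e).
    apply: le_trans (ler_norm _) _; rewrite normrM.
    by apply: ler_pM => //; exact: normr_ge0.
  have : 0 <= t2 * sy * CF * nB * e ^+ 2 by rewrite !mulr_ge0 // ?ltW // sqr_ge0.
  have : t2 * t2 <= t2 by nra.
  rewrite de; nra.
have b3 : t2 * sx * sy * (sx + sy) * d <= t2 * sy * (2 * M1) * d.
  have : sx * (sx + sy) <= 2 * M1 by nra.
  have : 0 <= t2 * sy * d by rewrite !mulr_ge0 // ltW.
  nra.
have : 0 <= t2 * (sx ^+ 2 + Fx) by rewrite mulr_ge0 ?addr_ge0 ?sqr_ge0 // ltW.
have : 0 <= sy * d by rewrite mulr_ge0 // ltW.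
move=> syd0 tF0.
have : sy * d <= 0 by nra.
by move=> syd; apply/eqP; rewrite eq_le d0 andbT -(pmulr_rle0 _ sy0).
Qed.

End InjectivityAlgebra.

Section InjectivityVector.
Variables (R : realType) (n : nat).
Local Notation V := 'rV[R]_n.

Lemma norm_sqr_scale_coord_le (g : V) (s M1 M2 : R) i :
  s ^+ 2 <= M1 -> s ^+ 2 * dotv g g <= M2 -> `|s ^+ 2 * g ord0 i| <= M1 + M2.
Proof.
move=> sM1 gM2; have gi := sqr_coord_le_dotv g i.
have s20 : 0 <= s ^+ 2 := sqr_ge0 s.
have : s ^+ 2 * g ord0 i ^+ 2 <= M2 by apply: le_trans gM2; rewrite ler_wpM2l.
rewrite normrM ger0_norm // -[g ord0 i ^+ 2]real_normK ?num_real //.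
have := normr_ge0 (g ord0 i); nra.
Qed.

Lemma sphere_eq_of_phi_eq (x y gx gy : V) (sx sy tau A C1 CF M1 M2 : R) :
  dotv x x = 1 -> dotv y y = 1 -> 0 < sx -> 0 < sy -> 0 < tau ->
  A *: x + (sx * tau) *: (gx - x) = A *: y + (sy * tau) *: (gy - y) ->
  2 * sx * tau * A = 1 + tau ^+ 2 * (sx ^+ 2 + sx ^+ 2 * dotv gx gx) ->
  2 * sy * tau * A = 1 + tau ^+ 2 * (sy ^+ 2 + sy ^+ 2 * dotv gy gy) ->
  (forall i, `|sx ^+ 2 * gx ord0 i - sy ^+ 2 * gy ord0 i| <= C1 * enorm (x - y)) ->
  `|sx ^+ 2 * dotv gx gx - sy ^+ 2 * dotv gy gy| <= CF * enorm (x - y) ->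
  sx ^+ 2 <= M1 -> sy ^+ 2 <= M1 -> sy ^+ 2 * dotv gy gy <= M2 ->
  0 <= CF -> 0 <= M1 -> 0 <= M2 ->
  tau ^+ 2 * M1 <= 2^-1 -> tau ^+ 2 <= 1 ->
  tau ^+ 2 * (2 * (n%:R * C1) + 4 * CF * (n%:R * (M1 + M2)) + 2 * M1) < 1 ->
  x = y.
Proof.
move=> x1 y1 sx0 sy0 tau0 phi_eq Ex Ey gxy_lip Fxy_lip sxM syM FyM CF0 M10 M20 t2M t21 small.
pose w := x - y.
have ww : dotv w w = 2 - 2 * dotv x y.
  by rewrite /w dotvBl !dotvBr x1 y1 (dotvC y x); ring.
have E1 : 2 * (tau * A) * dotv w w =
    2 * tau ^+ 2 * (sy * dotv gy w - sx * dotv gx w) + tau ^+ 2 * (sx + sy) * dotv w w.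
  have xw : dotv x w = 1 - dotv x y by rewrite /w dotvBr x1.
  have yw : dotv y w = dotv x y - 1 by rewrite /w dotvBr y1 dotvC.
  have h := congr1 (fun z => dotv z w) phi_eq.
  rewrite /= !dotvDl !dotvZl !dotvBl xw yw in h.
  rewrite ww (_ : 2 * (tau * A) * (2 - 2 * dotv x y)
    = 2 * tau * (A * (1 - dotv x y) - A * (dotv x y - 1))); last by ring.
  rewrite (_ : A * (1 - dotv x y) - A * (dotv x y - 1) =
    sy * tau * (dotv gy w - (dotv x y - 1)) - sx * tau * (dotv gx w - (1 - dotv x y))).
    by ring.
  by move: h; nra.
have hG : `|sy ^+ 2 * dotv gy w - sx ^+ 2 * dotv gx w| <= (n%:R * C1) * dotv w w.
  rewrite -(enorm_sq w) -!dotvZl -dotvBl expr2 !mulrA -(mulrA _ C1).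
  apply: norm_dotv_coord_le => i; rewrite !mxE -normrN opprB; exact: gxy_lip.
have hGy : `|sy ^+ 2 * dotv gy w| <= (n%:R * (M1 + M2)) * enorm w.
  rewrite -dotvZl; apply: norm_dotv_coord_le => i; rewrite mxE.
  exact: norm_sqr_scale_coord_le.
have Ex' : 2 * sx * (tau * A) = 1 + tau ^+ 2 * (sx ^+ 2 + sx ^+ 2 * dotv gx gx).
  by rewrite -Ex; ring.
have Ey' : 2 * sy * (tau * A) = 1 + tau ^+ 2 * (sy ^+ 2 + sy ^+ 2 * dotv gy gy).
  by rewrite -Ey; ring.
have w0 := sqr_dist_eq0 sx0 sy0 (exprn_gt0 2 tau0) (enorm_ge0 w) (esym (enorm_sq w)) E1 Ex' Ey'
  (mulr_ge0 (sqr_ge0 _) (dotv_ge0 _)) (mulr_ge0 (sqr_ge0 _) (dotv_ge0 _)) Fxy_lip hG hGy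
  sxM syM t2M t21 (mulr_ge0 (ler0n _ _) (addr_ge0 M10 M20)) CF0 small.
by apply/eqP; rewrite -subr_eq0; apply/eqP; exact: dotv_eq0.
Qed.

End InjectivityVector.

Lemma ler_normr_scale (R : realType) (a b C : R) : 0 <= b -> a <= C * b -> a <= `|C| * b.
Proof. by move=> b0 aCb; apply: le_trans aCb _; rewrite ler_wpM2r // ler_norm. Qed.

Section LargeShift.
Variables (R : realType) (m : nat).
Local Notation V := 'rV[R]_m.+1.
Variables (U Om V1 : set V) (rho s F : V -> R) (Cs CF M1 : R) (q0 : V).
Local Notation D := (Om `|` V1).
Local Notation sigma2 := (fun q => expR (- rho q) ^+ 2).

Hypothesis oU : open U.
Hypothesis Om_def : Om = U `&` @sphere R m.
Hypothesis D_closure : D `<=` closure Om.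
Hypothesis D_sphere : D `<=` @sphere R m.
Hypothesis rho_C2 : C2_upto Om D rho.
Hypothesis s_def : forall x, Om x -> s x = sigma2 x.
Hypothesis Cs_ge0 : 0 <= Cs.
Hypothesis D1s_lipschitz : forall i x y, Om x -> Om y ->
  `|D1 s i x - D1 s i y| <= Cs * enorm (x - y).
Hypothesis F_def : forall x, Om x ->
  F x = dotv (grad_in (fun y => expR (- rho y)) x) (grad_in (fun y => expR (- rho y)) x).
Hypothesis CF_ge0 : 0 <= CF.
Hypothesis F_lipschitz : forall x y, closure Om x -> closure Om y ->
  `|F x - F y| <= CF * enorm (x - y).
Hypothesis M1_ge0 : 0 <= M1.
Hypothesis sigma2_le : forall x, Om x -> sigma2 x <= M1.
Hypothesis Om_q0 : Om q0.

Let drho : forall x, Om x -> differentiable (radial rho) x.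
Proof. by case: rho_C2. Qed.

Lemma D1s_sigma2 i q : Om q -> D1 s i q = -2 * sigma2 q * D1 rho i q.
Proof.
move=> Oq; rewrite /D1 (derive_radial_s oU Om_def drho s_def) //.
by rewrite (radial_rho_Om _ Om_def) // expR_sqrN.
Qed.

Lemma F_sigma2 q : Om q -> F q = sigma2 q * dotv (grad_in rho q) (grad_in rho q).
Proof.
move=> Oq; rewrite F_def // /dotv mulr_sumr; apply: eq_bigr => i _.
rewrite !mxE /D1 (derive_radial_expRN drho) // (radial_rho_Om _ Om_def) //; ring.
Qed.

Let Om_sphere q : Om q -> sphere q.
Proof. by move=> Oq; apply: D_sphere; left. Qed.

Let Bs := \sum_i `|D1 s i q0| + Cs * 2.
Let M2 := `|F q0| + CF * 2.

Lemma D1s_bounded i q : Om q -> `|D1 s i q| <= Bs.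
Proof.
move=> Oq.
have i_le : `|D1 s i q0| <= \sum_j `|D1 s j q0|.
  by rewrite (bigD1 i) //= lerDl; apply: sumr_ge0 => j _; exact: normr_ge0.
have q_q0 : `|D1 s i q - D1 s i q0| <= Cs * 2.
  apply: le_trans (D1s_lipschitz i Oq Om_q0) _; rewrite ler_wpM2l //.
  exact: sphere_dist_le2 (Om_sphere Oq) (Om_sphere Om_q0).
have := ler_normD (D1 s i q0) (D1 s i q - D1 s i q0); rewrite addrC subrK addrC.
rewrite /Bs; lra.
Qed.

Lemma F_bounded q : Om q -> F q <= M2.
Proof.
move=> Oq; have q_cl := subset_closure Oq; have q0_cl := subset_closure Om_q0.
have q_q0 : `|F q - F q0| <= CF * 2.
  apply: le_trans (F_lipschitz q_cl q0_cl) _; rewrite ler_wpM2l //.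
  exact: sphere_dist_le2 (Om_sphere Oq) (Om_sphere Om_q0).
have := ler_norm (F q0); have := ler_norm (F q - F q0); rewrite /M2; lra.
Qed.

Let Ksch := M1 / 2 + (4 * Cs + Bs) * (m.+1)%:R + M2.

Lemma schouten_form_Om_le q X : Om q ->
  sigma2 q * schouten_form (grad_in rho q) (\matrix_(i, j) D2 rho i j q) X <= Ksch * dotv X X.
Proof.
move=> Oq; have [_ _ ddrho _ _] := rho_C2.
have Bs_ge0 : 0 <= Bs by apply: le_trans (D1s_bounded ord0 Oq); exact: normr_ge0.
have hess := hessian_lower_bound oU Om_def drho ddrho s_def Cs_ge0 Bs_ge0
  D1s_lipschitz D1s_bounded X Oq.
rewrite /= (radial_rho_Om _ Om_def) // -expR_sqrN in hess.
set g := grad_in rho q in hess *; set H := bilin _ X X in hess *.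
have gX : dotv g X * dotv g X <= dotv g g * dotv X X by rewrite -expr2; exact: dotv_sqr_le.
have sg : sigma2 q * dotv g g <= M2 by rewrite -F_sigma2 //; exact: F_bounded.
have s0 : 0 <= sigma2 q := sqr_ge0 _.
have X0 := dotv_ge0 X; have gg0 := dotv_ge0 g.
have p1 : sigma2 q * (dotv g X * dotv g X) <= M2 * dotv X X.
  by apply: le_trans (ler_wpM2l s0 gX) _; rewrite mulrA ler_wpM2r.
have p2 : sigma2 q * dotv X X <= M1 * dotv X X by rewrite ler_wpM2r // sigma2_le.
have p3 : 0 <= sigma2 q * dotv g g * dotv X X by rewrite !mulr_ge0.
rewrite /schouten_form /Ksch -/H; nra.
Qed.

Lemma cvg_sigma2 p : D p -> sigma2 @ within Om (nbhs p) --> sigma2 p.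
Proof.
move=> Dp; have [rho_cont _ _ _ _] := rho_C2.
have rho_cvg : rho @ within Om (nbhs p) --> rho p.
  apply: cvg_trans ((subspace_continuousP _ _).1 rho_cont p Dp).
  by apply: cvg_app; apply: within_subset => q Oq; left.
have := @within_nbhs_proper _ Om p (D_closure Dp) => PF.
by apply: cvgM; apply: (continuous_cvg _ (@continuous_expR R _)); exact: cvgN.
Qed.

Lemma cvg_grad_in i p : D p ->
  (fun q => grad_in rho q ord0 i) @ within Om (nbhs p) --> sgrad Om rho p ord0 i.
Proof.
case: rho_C2 => _ _ _ _ ext Dp; rewrite mxE.
by rewrite (_ : (fun q => _) = D1 rho i); [exact: (ext i i p Dp).1 | apply: funext => q; rewrite mxE].
Qed.

Lemma cvg_hessian i j p : D p ->
  (fun q => (\matrix_(k, l) D2 rho k l q) i j) @ within Om (nbhs p) --> shess Om rho p i j.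
Proof.
case: rho_C2 => _ _ _ _ ext Dp; rewrite mxE.
by rewrite (_ : (fun q => _) = D2 rho i j); [exact: (ext i j p Dp).2 | apply: funext => q; rewrite mxE].
Qed.

Lemma cvg_F p : D p ->
  (fun q => sigma2 q * dotv (grad_in rho q) (grad_in rho q)) @ within Om (nbhs p) -->
  sigma2 p * dotv (sgrad Om rho p) (sgrad Om rho p).
Proof.
move=> Dp; have := @within_nbhs_proper _ Om p (D_closure Dp) => PF.
apply: cvgM; first exact: cvg_sigma2.
by apply: cvg_sum_ord => i; apply: cvgM; exact: cvg_grad_in.
Qed.

Lemma schouten_le p X : D p -> sigma2 p * schouten Om rho p X X <= Ksch * dotv X X.
Proof.
move=> Dp; have := @within_nbhs_proper _ Om p (D_closure Dp) => PF.
apply: (le_cvg_within (D_closure Dp) _ (fun q Oq => schouten_form_Om_le X Oq)).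
rewrite schoutenE; apply: cvgM; first exact: cvg_sigma2.
by apply: cvg_schouten_form => [i|i j]; [exact: cvg_grad_in | exact: cvg_hessian].
Qed.

Lemma sigma2_le_D p : D p -> sigma2 p <= M1.
Proof. by move=> Dp; exact: le_cvg_within (D_closure Dp) (cvg_sigma2 Dp) sigma2_le. Qed.

Lemma F_le_D p : D p -> sigma2 p * dotv (sgrad Om rho p) (sgrad Om rho p) <= M2.
Proof.
move=> Dp; apply: le_cvg_within (D_closure Dp) (cvg_F Dp) _ => q Oq.
by rewrite -F_sigma2 //; exact: F_bounded.
Qed.

Lemma sgrad_lipschitz_D i x y : D x -> D y ->
  `|sigma2 x * sgrad Om rho x ord0 i - sigma2 y * sgrad Om rho y ord0 i| <= Cs * enorm (x - y).
Proof.
apply: (lipschitz_cvg_within (f := fun q => sigma2 q * grad_in rho q ord0 i)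
  (g := fun q => sigma2 q * sgrad Om rho q ord0 i)).
  move=> p Dp; split; first exact: D_closure.
  have := @within_nbhs_proper _ Om p (D_closure Dp) => PF.
  by apply: cvgM; [exact: cvg_sigma2 | exact: cvg_grad_in].
move=> q q' Oq Oq'; rewrite !mxE.
have D1rho q'' : Om q'' -> sigma2 q'' * D1 rho i q'' = - 2^-1 * D1 s i q''.
  by move=> Oq''; rewrite D1s_sigma2 //; field.
rewrite !D1rho // -mulrBr normrM normrN.
rewrite (ger0_norm (_ : 0 <= 2^-1)) ?invr_ge0 ?ler0n //.
have := D1s_lipschitz i Oq Oq'; have := normr_ge0 (D1 s i q - D1 s i q').
have := mulr_ge0 Cs_ge0 (enorm_ge0 (q - q')); lra.
Qed.

Lemma F_lipschitz_D x y : D x -> D y ->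
  `|sigma2 x * dotv (sgrad Om rho x) (sgrad Om rho x) -
    sigma2 y * dotv (sgrad Om rho y) (sgrad Om rho y)| <= CF * enorm (x - y).
Proof.
apply: (lipschitz_cvg_within (f := fun q => sigma2 q * dotv (grad_in rho q) (grad_in rho q))
  (g := fun q => sigma2 q * dotv (sgrad Om rho q) (sgrad Om rho q))).
  by move=> p Dp; split; [exact: D_closure | exact: cvg_F].
move=> q q' Oq Oq'; rewrite -!F_sigma2 //.
exact: F_lipschitz (subset_closure Oq) (subset_closure Oq').
Qed.

Let Kinj := 1 + 2 * ((m.+1)%:R * Cs) + 4 * CF * ((m.+1)%:R * (M1 + M2)) + 4 * M1.

Lemma phi_add_cst_injective t : Kinj <= 2 * t -> injective_on D (phi Om (fun x => rho x + t)).
Proof.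
move=> Kt x y Dx Dy; rewrite !phi_add_cstE /= => -[eA ev]; rewrite -eA in ev.
have M2_ge0 : 0 <= M2 by rewrite addr_ge0 ?mulr_ge0.
have CsM_ge0 : 0 <= (m.+1)%:R * Cs by rewrite mulr_ge0.
have CFM_ge0 : 0 <= CF * ((m.+1)%:R * (M1 + M2)).
  by apply: mulr_ge0 => //; apply: mulr_ge0; [exact: ler0n | exact: addr_ge0].
move: Kt; rewrite /Kinj => Kt; have M1_0 := M1_ge0.
apply: (sphere_eq_of_phi_eq (D_sphere Dx) (D_sphere Dy) (expR_gt0 _) (expR_gt0 _)
  (expR_gt0 (- t)) ev (phi_coord0_scaled _ _ _) _ (fun i => sgrad_lipschitz_D i Dx Dy)
  (F_lipschitz_D Dx Dy) (sigma2_le_D Dx) (sigma2_le_D Dy) (F_le_D Dy) CF_ge0 M1_ge0 M2_ge0).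
- by rewrite eA; exact: phi_coord0_scaled.
- have : expR (- t) ^+ 2 * (2 * M1) < 1.
    by apply: expR_sqrN_mul_lt1; lra.
  by rewrite mulrCA; lra.
- have : expR (- t) ^+ 2 * 1 < 1.
    by apply: expR_sqrN_mul_lt1; lra.
  by rewrite mulr1 => /ltW.
- by apply: expR_sqrN_mul_lt1; lra.
Qed.

Lemma large_shift_horo_embedding : exists t0 : R, 0 < t0 /\ forall t, t0 < t ->
  horo_concave Om D (fun x => rho x + t) /\ injective_on D (phi Om (fun x => rho x + t)).
Proof.
have Bs_ge0 : 0 <= Bs by apply: le_trans (D1s_bounded ord0 Om_q0); exact: normr_ge0.
have M2_ge0 : 0 <= M2 by rewrite addr_ge0 ?mulr_ge0.
have Ksch_ge0 : 0 <= Ksch.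
  rewrite /Ksch; apply: addr_ge0 => //; apply: addr_ge0; first exact: divr_ge0.
  by apply: mulr_ge0 => //; apply: addr_ge0 => //; apply: mulr_ge0.
have Kinj_ge0 : 0 <= Kinj.
  rewrite /Kinj; apply: addr_ge0; last exact: mulr_ge0.
  apply: addr_ge0; last by apply: mulr_ge0; apply: mulr_ge0 => //; exact: addr_ge0.
  by apply: addr_ge0 => //; apply: mulr_ge0 => //; exact: mulr_ge0.
exists (1 + Ksch + Kinj); split=> [|t t_gt]; first lra.
split; last by apply: phi_add_cst_injective; lra.
split=> [|p Dp lam]; first exact: C2_upto_add_cst.
by move=> eig; apply: (schouten_eigenvalue_add_cst_lt (fun X => schouten_le X Dp) Ksch_ge0 _ eig); lra.
Qed.

End LargeShift.

Theorem mainTheorem5 (R : realType) (m : nat) (hm : (3 <= m)%N)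
  (Om V1 V2 : set 'rV[R]_(m.+1)) (k1 k2 : nat) (alpha : R)
  (rho : 'rV[R]_(m.+1) -> R) :
  Om `<=` @sphere R m ->
  (exists U, open U /\ Om = U `&` @sphere R m) ->
  connected Om ->
  closure Om `\` Om = V1 `|` V2 ->
  V1 `&` V2 = set0 ->
  V1 `<=` @sphere R m -> V2 `<=` @sphere R m ->
  compact V1 -> compact V2 ->
  submanifold k1 V1 -> submanifold k2 V2 ->
  0 < alpha < 1 ->
  C2alpha Om (Om `|` V1) alpha rho ->
  (exists s : 'rV[R]_(m.+1) -> R,
      (forall x, Om x -> s x = expR (- rho x) ^+ 2) /\ C11_closure Om s) ->
  (exists F : 'rV[R]_(m.+1) -> R,
      (forall x, Om x ->
          F x = dotv (grad_in (fun y => expR (- rho y)) x)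
                     (grad_in (fun y => expR (- rho y)) x)) /\
      exists C : R, forall x y, closure Om x -> closure Om y ->
          `|F x - F y| <= C * enorm (x - y)) ->
  exists t0 : R, 0 < t0 /\
    forall t : R, t0 < t ->
      horo_concave Om (Om `|` V1) (fun x => rho x + t) /\
      injective_on (Om `|` V1) (phi Om (fun x => rho x + t)).
Proof.
move=> OmS [U [oU Om_def]] _ bdry _ V1S _ _ _ _ _ _ [rho_C2 _]
  [s [s_def [_ _ s_cont _ [Cs s_lip]]]] [F [F_def [CF F_lip]]].
have D_closure : Om `|` V1 `<=` closure Om.
  move=> p [/subset_closure //|V1p].
  have : (V1 `|` V2) p by left.
  by rewrite -bdry => -[].
have D_sphere : Om `|` V1 `<=` @sphere R m by move=> p [/OmS|/V1S].
have [[q0 Om_q0]|Om0] := pselect (exists q, Om q); last first.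
  have Om_eq0 : Om = set0 by apply/seteqP; split=> // q Oq; apply: Om0; exists q.
  have D0 p : ~ (Om `|` V1) p by move=> /D_closure; rewrite Om_eq0 closure0.
  exists 1; split=> [|t _]; first exact: ltr01.
  split; last by move=> x y /D0.
  split=> [|p /D0 //]; exact: C2_upto_add_cst.
have [M sM] := sphere_closure_bounded OmS s_cont.
apply: (large_shift_horo_embedding oU Om_def D_closure D_sphere rho_C2 s_def (normr_ge0 Cs)
  _ F_def (normr_ge0 CF) _ (normr_ge0 M) _ Om_q0).
- by move=> i x y Ox Oy; apply: ler_normr_scale (enorm_ge0 _) (s_lip i x y Ox Oy).
- by move=> x y clx cly; apply: ler_normr_scale (enorm_ge0 _) (F_lip x y clx cly).
- by move=> x Ox; rewrite -s_def //; apply: le_trans (sM x Ox) (ler_norm M).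
Qed.
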